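(* Let $n$ be a positive integer, $\mathcal{X}=\{\frac1n,\frac2n,\ldots,\frac nn\}$, and let $\mathcal{H}_{TH;n}=\{h_b : b\in\{\frac{1}{2n},\frac{3}{2n},\ldots,\frac{2n+1}{2n}\}\}$ where $h_b:\mathcal{X}\to\{0,1\}$ is given by $h_b(x)=1$ iff $x\le b$. Then for every $0<\alpha<1/3$, the class $\mathcal{H}_{TH;n}$ is $(\alpha,\alpha)$-separable.
   Context: For a class $\mathcal{H}$ over finite domain $\mathcal{X}$, its hypotheses graph is bipartite with parts $\mathcal{H}$ and $\mathcal{X}$, $h$ adjacent to $x$ iff $h(x)=1$. For $S\subseteq\mathcal{X}$, $T\subseteq\mathcal{H}$, $d(S,T)=\frac{e(S,T)}{|S||T|}$ where $e(S,T)$ is the number of edges between $S$ and $T$. Two hypotheses $h_1,h_2$ are $\epsilon$-close if $|\{x: h_1(x)\ne h_2(x)\}|\le\epsilon|\mathcal{X}|$; $B_h(\epsilon)$ is the set of hypotheses $\epsilon$-close to $h$. $T\subseteq\mathcal{H}$ is $(\alpha,\epsilon)$-tight if there is $h$ with $|T\cap B_h(\epsilon)|\ge\alpha|T|$. $\mathcal{H}$ is $(\alpha,\epsilon)$-separable if for every $T\subseteq\mathcal{H}$ that is not $(\alpha,\epsilon)$-tight there exist $S\subseteq\mathcal{X}$ and disjoint $T_0,T_1\subseteq T$ with $|S|\ge\alpha|\mathcal{X}|$, $|T_0|\ge\alpha|T|$, $|T_1|\ge\alpha|T|$ and $|d(S,T_0)-d(S,T_1)|\ge\alpha$. *)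

From HB Require Import structures.
From mathcomp Require Import all_boot all_order all_algebra.
From mathcomp Require Import reals.
Set Implicit Arguments. Unset Strict Implicit. Unset Printing Implicit Defensive.
Import Order.TTheory GRing.Theory Num.Theory.
Local Open Scope ring_scope.

Definition edges (X : finType) (S : {set X}) (T : {set {ffun X -> bool}}) : nat :=
  #|[set p : X * {ffun X -> bool} | [&& p.1 \in S, p.2 \in T & p.2 p.1]]|.

Definition density (R : realType) (X : finType) (S : {set X})
  (T : {set {ffun X -> bool}}) : R :=
  (edges S T)%:R / (#|S|%:R * #|T|%:R).

Definition eps_close (R : realType) (X : finType) (eps : R)
  (h1 h2 : {ffun X -> bool}) : bool :=
  (#|[set x : X | h1 x != h2 x]|%:R : R) <= eps * #|X|%:R.

Definition ball (R : realType) (X : finType) (H : {set {ffun X -> bool}})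
  (h : {ffun X -> bool}) (eps : R) : {set {ffun X -> bool}} :=
  [set h' in H | eps_close eps h h'].

Definition tight (R : realType) (X : finType) (H : {set {ffun X -> bool}})
  (T : {set {ffun X -> bool}}) (alpha eps : R) : Prop :=
  exists2 h, h \in H & alpha * #|T|%:R <= (#|T :&: ball H h eps|%:R : R).

Definition separable (R : realType) (X : finType) (H : {set {ffun X -> bool}})
  (alpha eps : R) : Prop :=
  forall T : {set {ffun X -> bool}}, T \subset H -> ~ tight H T alpha eps ->
  exists (S : {set X}) (T0 T1 : {set {ffun X -> bool}}),
    [/\ T0 \subset T, T1 \subset T, [disjoint T0 & T1] &
      [/\ alpha * #|X|%:R <= (#|S|%:R : R),
        alpha * #|T|%:R <= (#|T0|%:R : R),
        alpha * #|T|%:R <= (#|T1|%:R : R) &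
        alpha <= `|density R S T0 - density R S T1| ]].

(* Domain X = {1/n, ..., n/n}: i : 'I_n represents the point (i+1)/n.
   Threshold h_b for b = (2j+1)/(2n), j = 0..n:  h_b(x) = 1 iff x <= b. *)
Definition point (n : nat) (i : 'I_n) : rat := (i.+1)%:R / n%:R.
Definition thr (n : nat) (j : 'I_n.+1) : rat := (2 * j + 1)%:R / (2 * n)%:R.
Definition h_thr (n : nat) (j : 'I_n.+1) : {ffun 'I_n -> bool} :=
  [ffun i => point i <= thr j].
Definition H_TH (n : nat) : {set {ffun 'I_n -> bool}} :=
  [set h_thr j | j : 'I_n.+1].

From HB Require Import structures.
From mathcomp Require Import all_boot all_order all_algebra.
From mathcomp Require Import reals.
From mathcomp Require Import zify lra.
Set Implicit Arguments. Unset Strict Implicit.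
Import Order.TTheory GRing.Theory Num.Theory.
Local Open Scope ring_scope.

(* Index the thresholds in T by j : 'I_n.+1, so that h_j(x) = 1 iff x < j.
   Let a be the lower and b the upper alpha-quantile of the indices in T.
   Fewer than alpha|T| indices lie below a and fewer than alpha|T| above b,
   so since alpha < 1/3 more than alpha|T| lie in [a, b].  As T is not tight,
   the ball around h_a misses one of them, h_j say; h_a and h_j disagree
   exactly on the points x with a <= x < j, hence the strip S = [a, b) has
   more than alpha n points.  On S, every h_j with j <= a is 0 and every h_j
   with j >= b is 1, so T0 = {j <= a} and T1 = {j >= b} have densities 0 and
   1 on S, and both have at least alpha|T| elements by choice of a and b. *)

Lemma exists_lower_quantile (R : realDomainType) (A : finType) (T : {set A})
    (f : A -> nat) (c : R) :
  0 < c -> c <= #|T|%:R ->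
  exists a, c <= #|[set t in T | (f t <= a)%N]|%:R /\
            #|[set t in T | (f t < a)%N]|%:R < c.
Proof.
move=> c_gt0 c_le_T.
pose P a := c <= #|[set t in T | (f t <= a)%N]|%:R.
have P_max : P (\max_(t in T) f t).
  rewrite /P (_ : [set t in T | _] = T) //; apply/setP => t; rewrite inE.
  by apply/andb_idr => /leq_bigmax_cond.
case: (ex_minnP (ex_intro P _ P_max)) => a Pa a_min; exists a; split=> //.
case: a Pa a_min => [|a] _ a_min.
  rewrite (_ : [set t in T | _] = set0) ?cards0 //.
  by apply/setP => t; rewrite !inE ltn0 andbF.
by rewrite ltNge; apply/negP => /a_min; rewrite ltnn.
Qed.

Lemma exists_upper_quantile (R : realDomainType) (A : finType) (T : {set A})
    (f : A -> nat) (c : R) :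
  0 < c -> c <= #|T|%:R ->
  exists b, c <= #|[set t in T | (b <= f t)%N]|%:R /\
            #|[set t in T | (b < f t)%N]|%:R < c.
Proof.
move=> c_gt0 c_le_T.
pose P b := c <= #|[set t in T | (b <= f t)%N]|%:R.
have P0 : P 0%N.
  by rewrite /P (_ : [set t in T | _] = T) //; apply/setP => t; rewrite inE andbT.
have P_bounded b : P b -> (b <= \max_(t in T) f t)%N.
  move=> Pb; have : (0 < #|[set t in T | (b <= f t)%N]|)%N.
    by rewrite -(ltr0n R); apply: lt_le_trans Pb.
  case/card_gt0P => t; rewrite inE => /andP [tT le_bt].
  exact: leq_trans le_bt (leq_bigmax_cond _ tT).
case: (ex_maxnP (ex_intro P _ P0) P_bounded) => b Pb b_max; exists b; split=> //.
by rewrite ltNge; apply/negP => /b_max; rewrite ltnn.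
Qed.

Lemma leq_card_range3 (A : finType) (T : {set A}) (f : A -> nat) (a b : nat) :
  (#|T| <= #|[set t in T | f t < a]| + #|[set t in T | a <= f t <= b]|
           + #|[set t in T | b < f t]|)%N.
Proof.
apply: leq_trans (leq_add (leq_card_setU _ _) (leqnn _)).
apply: leq_trans (leq_card_setU _ _); apply: subset_leq_card.
by apply/subsetP => t tT; rewrite !inE tT /=; case: ltnP; case: ltnP.
Qed.

Lemma eps_close_refl (R : realType) (X : finType) (eps : R) (h : {ffun X -> bool}) :
  0 <= eps -> eps_close eps h h.
Proof.
move=> eps_ge0; rewrite /eps_close (_ : [set x | h x != h x] = set0).
  by rewrite cards0 mulr_ge0.
by apply/setP => x; rewrite !inE eqxx.
Qed.

Lemma density_eq0 (R : realType) (X : finType) (S : {set X})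
    (T : {set {ffun X -> bool}}) :
  {in S & T, forall x (t : {ffun X -> bool}), ~~ t x} -> density R S T = 0.
Proof.
move=> no_edge; rewrite /density /edges (_ : [set p | _] = set0) ?cards0 ?mul0r //.
apply/setP => -[x t]; rewrite !inE /=; apply/negP => /and3P [xS tT].
exact/negP/no_edge.
Qed.

Lemma density_eq1 (R : realType) (X : finType) (S : {set X})
    (T : {set {ffun X -> bool}}) :
  S != set0 -> T != set0 -> {in S & T, forall x (t : {ffun X -> bool}), t x} -> density R S T = 1.
Proof.
move=> S_n0 T_n0 all_edges.
rewrite /density /edges (_ : [set p | _] = setX S T) ?cardsX ?natrM.
  by rewrite divff // mulf_neq0 // pnatr_eq0 cards_eq0.
apply/setP => -[x t]; rewrite !inE /=.
by apply/and3P/andP => [[] | [xS tT]]; last rewrite all_edges.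
Qed.

Lemma h_thrE n (j : 'I_n.+1) (i : 'I_n) : h_thr j i = (i < j)%N.
Proof.
have n_gt0 : (0 < n)%N by case: i => i /=; lia.
rewrite ffunE /point /thr -(ler_pM2r (_ : 0 < (2 * n)%:R :> rat)) ?ltr0n; last by lia.
have -> : (i.+1)%:R / n%:R * (2 * n)%:R = (2 * i.+1)%:R :> rat.
  have n_neq0 : (n%:R : rat) != 0 by rewrite pnatr_eq0 -lt0n.
  by rewrite !natrM mulrCA divfK.
by rewrite divfK ?pnatr_eq0 ?ler_nat; lia.
Qed.

Lemma h_thr_neq n (j k : 'I_n.+1) (x : 'I_n) :
  (j <= k)%N -> (h_thr j x != h_thr k x) = (j <= x < k)%N.
Proof. by rewrite !h_thrE; case: ltnP; case: ltnP => /=; lia. Qed.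

Lemma mem_H_TH n (j : 'I_n.+1) : h_thr j \in H_TH n.
Proof. exact: imset_f. Qed.

Definition thr_index n (t : {ffun 'I_n -> bool}) : 'I_n.+1 :=
  odflt ord0 [pick j | h_thr j == t].

Lemma thr_indexK n (t : {ffun 'I_n -> bool}) : t \in H_TH n -> h_thr (thr_index t) = t.
Proof.
case/imsetP => j _ ->; rewrite /thr_index.
by case: pickP => [k /eqP | /(_ j)]; last rewrite eqxx.
Qed.

Section ThresholdSeparation.

Variables (R : realType) (n : nat) (alpha : R) (T : {set {ffun 'I_n -> bool}}).
Hypotheses (alpha_gt0 : 0 < alpha) (alpha_lt : alpha < 1 / 3).
Hypotheses (T_sub : T \subset H_TH n) (T_not_tight : ~ tight (H_TH n) T alpha alpha).

Lemma card_ball_lt h :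
  h \in H_TH n -> (#|T :&: ball (H_TH n) h alpha|%:R : R) < alpha * #|T|%:R.
Proof. by move=> hH; rewrite ltNge; apply/negP => le; apply: T_not_tight; exists h. Qed.

Lemma one_lt_alpha_card : 1 < alpha * #|T|%:R.
Proof.
case: (set_0Vmem T) => [T_eq0 | [t tT]].
  by case: T_not_tight; exists (h_thr ord0); rewrite ?mem_H_TH // T_eq0 cards0 mulr0.
have tH := subsetP T_sub t tT.
apply: le_lt_trans (card_ball_lt tH); rewrite ler1n card_gt0; apply/set0Pn.
by exists t; rewrite !inE tT tH eps_close_refl // ltW.
Qed.

Section Cut.

Variables a b : nat.
Local Notation below := [set t in T | (thr_index t < a)%N].
Local Notation T0 := [set t in T | (thr_index t <= a)%N].
Local Notation middle := [set t in T | (a <= thr_index t <= b)%N].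
Local Notation T1 := [set t in T | (b <= thr_index t)%N].
Local Notation above := [set t in T | (b < thr_index t)%N].
Local Notation S := [set x : 'I_n | (a <= x < b)%N].
Hypotheses (T0_big : alpha * #|T|%:R <= #|T0|%:R) (T1_big : alpha * #|T|%:R <= #|T1|%:R).
Hypotheses (below_small : #|below|%:R < alpha * #|T|%:R)
  (above_small : #|above|%:R < alpha * #|T|%:R).

Lemma card_middle_gt : alpha * #|T|%:R < #|middle|%:R.
Proof.
have := leq_card_range3 T (fun t => nat_of_ord (thr_index t)) a b.
rewrite -(ler_nat R) !natrD => T_le.
have : 0 <= #|T|%:R * (1 - 3 * alpha) by rewrite mulr_ge0 ?ler0n //; move: alpha_lt; lra.
by move: below_small above_small T_le; lra.
Qed.

Lemma a_lt_b : (a < b)%N.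
Proof.
rewrite ltnNge; apply/negP => le_ba.
have : (#|middle| <= 1)%N.
  apply/card_le1_eqP => t1 t2; rewrite !inE => /and3P [t1T ? ?] /and3P [t2T ? ?].
  rewrite -(thr_indexK (subsetP T_sub _ t1T)) -(thr_indexK (subsetP T_sub _ t2T)).
  by congr h_thr; apply/val_inj/eqP; rewrite /= eqn_leq; apply/andP; split; lia.
rewrite -(ler_nat R) => middle_le1.
by have := lt_le_trans (lt_trans one_lt_alpha_card card_middle_gt) middle_le1; rewrite ltxx.
Qed.

Lemma card_T1_gt0 : (0 < #|T1|)%N.
Proof. by rewrite -(ltr0n R); apply: lt_le_trans T1_big; apply: lt_trans one_lt_alpha_card. Qed.

Lemma b_le_n : (b <= n)%N.
Proof.
by case/card_gt0P: card_T1_gt0 => t; rewrite inE => /andP [_ le_bt]; have := ltn_ord (thr_index t); lia.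
Qed.

Let a_ord : 'I_n.+1 := Ordinal (ltnW (leq_trans a_lt_b b_le_n) : (a < n.+1)%N).

Lemma card_S_ge : alpha * #|'I_n|%:R <= #|S|%:R.
Proof.
rewrite leNgt; apply/negP => S_small.
have : (#|middle| <= #|T :&: ball (H_TH n) (h_thr a_ord) alpha|)%N.
  apply/subset_leq_card/subsetP => t; rewrite !inE => /and3P [tT le_at le_tb].
  have tH := subsetP T_sub t tT; rewrite tT tH /eps_close.
  apply: le_trans (ltW S_small); rewrite ler_nat; apply/subset_leq_card/subsetP => x.
  by rewrite -(thr_indexK tH) !inE h_thr_neq //=; lia.
rewrite -(ler_nat R) => middle_le.
have := lt_le_trans card_middle_gt middle_le.
by rewrite ltNge => /negP; apply; apply/ltW/card_ball_lt/mem_H_TH.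
Qed.

Lemma density_S_T0 : density R S T0 = 0.
Proof.
apply: density_eq0 => x t; rewrite !inE => /andP [le_ax _] /andP [tT le_ta].
by rewrite -(thr_indexK (subsetP T_sub t tT)) h_thrE -leqNgt (leq_trans le_ta).
Qed.

Lemma density_S_T1 : density R S T1 = 1.
Proof.
apply: density_eq1.
- by apply/set0Pn; exists (Ordinal (leq_trans a_lt_b b_le_n)); rewrite inE /= leqnn a_lt_b.
- by rewrite -card_gt0 card_T1_gt0.
move=> x t; rewrite !inE => /andP [_ lt_xb] /andP [tT le_bt].
by rewrite -(thr_indexK (subsetP T_sub t tT)) h_thrE (leq_trans lt_xb).
Qed.

Lemma separating_cut :
  exists (S : {set 'I_n}) (T0 T1 : {set {ffun 'I_n -> bool}}),
    [/\ T0 \subset T, T1 \subset T, [disjoint T0 & T1] &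
      [/\ alpha * #|'I_n|%:R <= (#|S|%:R : R),
        alpha * #|T|%:R <= (#|T0|%:R : R),
        alpha * #|T|%:R <= (#|T1|%:R : R) &
        alpha <= `|density R S T0 - density R S T1| ]].
Proof.
exists S, T0, T1; split.
- by apply/subsetP => t; rewrite inE => /andP [].
- by apply/subsetP => t; rewrite inE => /andP [].
- rewrite disjoints_subset; apply/subsetP => t; rewrite !inE => /andP [_ le_ta].
  by apply/negP => /andP [_ le_bt]; have := a_lt_b; lia.
split=> //; first exact: card_S_ge.
by rewrite density_S_T0 density_S_T1 sub0r normrN normr1; move: alpha_lt; lra.
Qed.

End Cut.

End ThresholdSeparation.

Theorem mainTheorem3 (R : realType) (n : nat) (hn : (0 < n)%N) (alpha : R) :
  0 < alpha -> alpha < 1 / 3 -> separable (H_TH n) alpha alpha.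
Proof.
move=> alpha_gt0 alpha_lt T T_sub T_not_tight.
have c_gt0 : 0 < alpha * #|T|%:R.
  exact: lt_trans ltr01 (one_lt_alpha_card alpha_gt0 T_sub T_not_tight).
have c_le : alpha * #|T|%:R <= #|T|%:R by rewrite ler_piMl ?ler0n //; lra.
pose idx t := nat_of_ord (@thr_index n t).
have [a [T0_big below_small]] := exists_lower_quantile idx c_gt0 c_le.
have [b [T1_big above_small]] := exists_upper_quantile idx c_gt0 c_le.
exact: separating_cut T0_big T1_big below_small above_small.
Qed.
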